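(* Let $i_0\ge1$ be an integer and $f:[p_{i_0},+\infty)\to\mathbb R$ an increasing function such that $p_{i+1}\le p_i+f(p_{i+1})$ for all $i\ge i_0$. Let $k\ge1$ and $x\ge p_{i_0+k-1}$. If $t\mapsto f(t)/t$ is decreasing for $t\ge x$, then \[ \eta_k(x)\ge 1-k\frac{f(x)}{x}. \]
   Context: $p_i$ denotes the $i$-th prime. For $x\ge p_k$, $\eta_k(x)=\min\{p_{i-k}/p_i:\ p_i>x\}$. *)

From HB Require Import structures.
From mathcomp Require Import all_boot all_order all_algebra.
From mathcomp Require Import all_classical all_reals.
Set Implicit Arguments. Unset Strict Implicit. Unset Printing Implicit Defensive.
Import Order.TTheory GRing.Theory Num.Theory.

Lemma next_prime_ex (m : nat) : exists q, (m < q) && prime q.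
Proof. by case: (prime_above m) => q Hq Hp; exists q; rewrite Hq Hp. Qed.

Definition next_prime (m : nat) : nat := ex_minn (next_prime_ex m).

(* p_ i = the i-th prime, 1-indexed: p_ 1 = 2, p_ 2 = 3, p_ 3 = 5, ...
   (p_ 0 = 1 is a junk value, never used for i >= 1). *)
Definition p_ (i : nat) : nat := iter i next_prime 1.

Local Open Scope ring_scope.
Local Open Scope classical_set_scope.

(* eta_k(x) = min { p_{i-k} / p_i : p_i > x }, taken as the infimum
   (the minimum is attained, so inf = min). *)
Definition eta_k (R : realType) (k : nat) (x : R) : R :=
  inf [set ((p_ (i - k))%:R / (p_ i)%:R : R) | i in [set i : nat | x < (p_ i)%:R]].

From HB Require Import structures.
From mathcomp Require Import all_boot all_order all_algebra.
From mathcomp Require Import all_classical all_reals.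
From mathcomp Require Import ring lra zify.
Set Implicit Arguments. Unset Strict Implicit. Unset Printing Implicit Defensive.
Import Order.TTheory GRing.Theory Num.Theory.
Local Open Scope ring_scope.

(* Summing the gap inequality over k consecutive primes and using that f is
   increasing gives p_i <= p_{i-k} + k f(p_i) whenever i - k >= i0, i.e.
   p_{i-k} / p_i >= 1 - k f(p_i) / p_i.  Every p_i > x satisfies i - k >= i0
   because x >= p_{i0+k-1}, and f(p_i) / p_i <= f(x) / x since f(t) / t
   decreases beyond x; so each ratio in the set defining eta_k(x) is at least
   1 - k f(x) / x. *)

Lemma next_prime_gt (m : nat) : (m < next_prime m)%N.
Proof. by rewrite /next_prime; case: ex_minnP => q /andP[]. Qed.

Lemma ltn_p_S (i : nat) : (p_ i < p_ i.+1)%N.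
Proof. by rewrite /p_ iterS; apply: next_prime_gt. Qed.

Lemma ltn_p (i : nat) : (i < p_ i)%N.
Proof. by elim: i => [//|i IH]; apply: leq_ltn_trans IH (ltn_p_S i). Qed.

Lemma leq_p : {mono p_ : m n / (m <= n)%N}.
Proof. by apply: leq_mono; apply: homo_ltn; [apply: ltn_trans | apply: ltn_p_S]. Qed.

Section PrimeGaps.

Variables (R : realDomainType) (i0 : nat) (f : R -> R).
Hypothesis f_nondecr : forall s t : R, (p_ i0)%:R <= s -> s <= t -> f s <= f t.
Hypothesis p_gap : forall i : nat, (i0 <= i)%N ->
  (p_ i.+1)%:R <= (p_ i)%:R + f (p_ i.+1)%:R.

Lemma p_addn_le (m n : nat) : (i0 <= m)%N ->
  (p_ (m + n))%:R <= (p_ m)%:R + n%:R * f (p_ (m + n))%:R.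
Proof.
move=> le_i0m; elim: n => [|n IHn]; first by rewrite addn0 mul0r addr0.
have le_i0mn : (i0 <= m + n)%N by apply: leq_trans le_i0m (leq_addr _ _).
have f_step : f (p_ (m + n))%:R <= f (p_ (m + n).+1)%:R.
  by apply: f_nondecr; rewrite ler_nat leq_p.
have nf_step : n%:R * f (p_ (m + n))%:R <= n%:R * f (p_ (m + n).+1)%:R.
  exact: ler_wpM2l.
rewrite addnS -natr1 mulrDl mul1r.
by apply: le_trans (p_gap le_i0mn) _; lra.
Qed.

End PrimeGaps.

Lemma ratio_p_subn_ge (R : realFieldType) (i0 : nat) (f : R -> R) (k i : nat) :
  (forall s t : R, (p_ i0)%:R <= s -> s <= t -> f s <= f t) ->
  (forall i : nat, (i0 <= i)%N -> (p_ i.+1)%:R <= (p_ i)%:R + f (p_ i.+1)%:R) ->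
  (i0 + k <= i)%N ->
  1 - k%:R * (f (p_ i)%:R / (p_ i)%:R) <= (p_ (i - k))%:R / (p_ i)%:R.
Proof.
move=> f_nondecr p_gap le_i0k_i.
have le_i0_ik : (i0 <= i - k)%N by lia.
have := p_addn_le f_nondecr p_gap k le_i0_ik; rewrite subnK; last lia.
set P := (p_ i)%:R : R => p_le.
have P_gt0 : 0 < P by rewrite ltr0n (leq_ltn_trans _ (ltn_p i)).
have -> : 1 - k%:R * (f P / P) = (P - k%:R * f P) / P by field; rewrite gt_eqF.
by apply: ler_wpM2r; [rewrite invr_ge0 ltW | lra].
Qed.

Lemma exists_p_gt (R : realType) (x : R) : exists i : nat, x < (p_ i)%:R.
Proof.
exists (Num.truncn x).+1; apply: lt_trans (truncnS_gt x) _.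
by rewrite ltr_nat ltn_p.
Qed.

Theorem mainTheorem12 (R : realType) (i0 : nat) (f : R -> R) (k : nat) (x : R) :
  (1 <= i0)%N ->
  (forall s t : R, (p_ i0)%:R <= s -> s <= t -> f s <= f t) ->
  (forall i : nat, (i0 <= i)%N -> (p_ i.+1)%:R <= (p_ i)%:R + f (p_ i.+1)%:R) ->
  (1 <= k)%N ->
  (p_ (i0 + k - 1))%:R <= x ->
  (forall s t : R, x <= s -> s <= t -> f t / t <= f s / s) ->
  1 - k%:R * (f x / x) <= @eta_k R k x.
Proof.
move=> _ f_nondecr p_gap k_gt0 le_p_x ratio_nonincr.
apply: lb_le_inf.
  by have [i x_lt] := exists_p_gt x; exists ((p_ (i - k))%:R / (p_ i)%:R), i.
move=> _ [i /= x_lt <-].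
have le_i0k_i : (i0 + k <= i)%N.
  have : (p_ (i0 + k - 1) < p_ i)%N by rewrite -(ltr_nat R); apply: le_lt_trans x_lt.
  by rewrite ltnNge leq_p -ltnNge; lia.
have ratio_le := ratio_nonincr x (p_ i)%:R (lexx x) (ltW x_lt).
have kratio_le : k%:R * (f (p_ i)%:R / (p_ i)%:R) <= k%:R * (f x / x).
  exact: ler_wpM2l.
have := ratio_p_subn_ge f_nondecr p_gap le_i0k_i; lra.
Qed.
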